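(* For all $n\in\mathbb N=\{0,1,2,\dots\}$ and all integers $d\geq 1$, the rational fraction $$S_{n,d}=\sum_{k=0}^nU_{d-1}\circ T_{(d+1)^k}\prod_{j=0}^k\frac{1}{U_d\circ T_{(d+1)^j}}\in\mathbb Q(x)$$ satisfies the identity $$S_{n,d}^2-2xS_{n,d}+1=\left(\prod_{j=0}^n\frac{1}{U_d\circ T_{(d+1)^j}}\right)^2.$$
   Context: $T_n=T_n(x)$ and $U_n=U_n(x)$ denote the Chebyshev polynomials of the first and second kind, defined by $T_0=1$, $T_1=x$, $T_{n+1}=2xT_n-T_{n-1}$ and $U_0=1$, $U_1=2x$, $U_{n+1}=2xU_n-U_{n-1}$ for $n\geq1$. The symbol $\circ$ denotes composition of polynomials, so $U_{d}\circ T_m$ is $U_d(T_m(x))$. *)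

From HB Require Import structures.
From mathcomp Require Import all_boot all_order all_algebra fraction.
Set Implicit Arguments. Unset Strict Implicit. Unset Printing Implicit Defensive.
Import Order.TTheory GRing.Theory Num.Theory.
Local Open Scope ring_scope.

Fixpoint chebT (n : nat) : {poly rat} :=
  match n with
  | 0 => 1
  | 1 => 'X
  | (m.+1 as k).+1 => 2%:P * 'X * chebT k - chebT m
  end.

Fixpoint chebU (n : nat) : {poly rat} :=
  match n with
  | 0 => 1
  | 1 => 2%:P * 'X
  | (m.+1 as k).+1 => 2%:P * 'X * chebU k - chebU m
  end.

Definition toQx (p : {poly rat}) : {fraction {poly rat}} := @FracField.tofrac _ p.

Definition Dj (d j : nat) : {fraction {poly rat}} :=
  toQx (chebU d \Po chebT ((d.+1) ^ j)%N).

Definition S_nd (n d : nat) : {fraction {poly rat}} :=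
  \sum_(k < n.+1)
     toQx (chebU d.-1 \Po chebT ((d.+1) ^ k)%N) * \prod_(j < k.+1) (Dj d j)^-1.

From mathcomp Require Import all_boot all_algebra fraction.
From mathcomp Require Import ring zify.
Set Implicit Arguments. Unset Strict Implicit. Unset Printing Implicit Defensive.
Import GRing.Theory Num.Theory.
Local Open Scope ring_scope.

(* With W_m := U_(m-1), the Chebyshev polynomials satisfy T_n o T_m = T_(nm)
   and W_n(T_m) W_m = W_(nm); hence the partial products of the U_d o T_(e^j),
   e = d + 1, are W_(e^k), and T_(ek) = T_k W_e(T_k) - W_d(T_k) makes S_(n,d)
   telescope to x - T_N / W_N with N = e^(n+1). The identity is then the Pell
   equation T_N^2 - (x^2 - 1) W_N^2 = 1 divided by W_N^2. *)

Lemma nat_ind2 (P : nat -> Prop) :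
  P 0%N -> P 1%N -> (forall n, P n -> P n.+1 -> P n.+2) -> forall n, P n.
Proof.
move=> P0 P1 PS n; suff: P n /\ P n.+1 by case.
by elim: n => [|n [Pn Pn1]]; split=> //; apply: PS.
Qed.

Section ChebyshevRecurrence.
Variable R : comNzRingType.

Fixpoint chebyT (y : R) (n : nat) : R :=
  match n with
  | 0 => 1
  | 1 => y
  | (m.+1 as k).+1 => 2%:R * y * chebyT y k - chebyT y m
  end.

(* [chebyW y n] is U_(n-1)(y), with [chebyW y 0 = 0]; this shift of index is
   what makes [chebyW] multiplicative in [n] (see [chebyW_mul]). *)
Fixpoint chebyW (y : R) (n : nat) : R :=
  match n with
  | 0 => 0
  | 1 => 1
  | (m.+1 as k).+1 => 2%:R * y * chebyW y k - chebyW y m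
  end.

Definition chebyshev_rec (y : R) (s : nat -> R) :=
  forall n, s n.+2 = 2%:R * y * s n.+1 - s n.

Lemma chebyT_rec y : chebyshev_rec y (chebyT y). Proof. by []. Qed.
Lemma chebyW_rec y : chebyshev_rec y (chebyW y). Proof. by []. Qed.

Lemma chebyshev_rec_eq y s t : chebyshev_rec y s -> chebyshev_rec y t ->
  s 0%N = t 0%N -> s 1%N = t 1%N -> s =1 t.
Proof.
move=> hs ht s0 s1; elim/nat_ind2=> // n IH1 IH2.
by rewrite hs ht IH1 IH2.
Qed.

Lemma chebyshev_recD y s : chebyshev_rec y s -> forall b m,
  s (m + b.*2)%N + s m = 2%:R * chebyT y b * s (m + b)%N.
Proof.
move=> hs; elim/nat_ind2=> [m|m|b IH1 IH2 m].
- by rewrite /= !addn0; ring.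
- by rewrite /= addn1 addn2 hs; ring.
have {}IH2 := IH2 m.+1; have {}IH1 := IH1 m.+2.
have -> : (m + b.+2 = m.+1 + b.+1)%N by lia.
have -> : (m + b.+2.*2 = (m.+1 + b.+1.*2).+1)%N by lia.
rewrite chebyT_rec.
have -> : 2%:R * (2%:R * y * chebyT y b.+1 - chebyT y b) * s (m.+1 + b.+1)%N
  = 2%:R * y * (2%:R * chebyT y b.+1 * s (m.+1 + b.+1)%N)
    - 2%:R * chebyT y b * s (m.+2 + b)%N.
  by rewrite -addSnnS; ring.
rewrite -IH2 -IH1 (hs m).
have -> : (m.+1 + b.+1.*2).+1 = (m.+2 + b.*2).+2 by lia.
have -> : (m.+1 + b.+1.*2 = (m.+2 + b.*2).+1)%N by lia.
rewrite hs; ring.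
Qed.

Lemma chebyshev_rec_dilate y s b : chebyshev_rec y s ->
  chebyshev_rec (chebyT y b) (fun n => s (n * b)%N).
Proof.
move=> hs n /=.
have -> : (n.+2 * b = n * b + b.*2)%N by lia.
have -> : (n.+1 * b = n * b + b)%N by lia.
by rewrite -(chebyshev_recD hs) addrK.
Qed.

Lemma chebyT_mul y b n : chebyT y (n * b) = chebyT (chebyT y b) n.
Proof.
apply: (chebyshev_rec_eq (chebyshev_rec_dilate b (chebyT_rec y))) => //=.
by rewrite mul1n.
Qed.

Lemma chebyW_mul y b n : chebyW y (n * b) = chebyW (chebyT y b) n * chebyW y b.
Proof.
pose t m := chebyW (chebyT y b) m * chebyW y b.
apply: (chebyshev_rec_eq (t := t) (chebyshev_rec_dilate b (chebyW_rec y))).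
- by move=> k; rewrite /t chebyW_rec; ring.
- by rewrite /t mul0r.
- by rewrite /t mul1n mul1r.
Qed.

Lemma chebyT_chebyW y k : chebyT y k.+1 = y * chebyW y k.+1 - chebyW y k.
Proof.
pose t m := y * chebyW y m.+1 - chebyW y m.
apply: (chebyshev_rec_eq (y := y) (s := fun m => chebyT y m.+1) (t := t))
  => [m|m|/=|/=].
- exact: chebyT_rec.
- by rewrite /t !chebyW_rec; ring.
- by rewrite /t /=; ring.
- by rewrite /t /=; ring.
Qed.

Lemma chebyT_chebyW_succ y k :
  chebyT y k.+1 = y * chebyT y k + (y ^+ 2 - 1) * chebyW y k
  /\ chebyW y k.+1 = chebyT y k + y * chebyW y k.
Proof.
elim/nat_ind2: k => [|| k [IH1 IH1'] [IH2 IH2']]; first by split=> /=; ring.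
  by split=> /=; ring.
rewrite (chebyT_rec y k.+1) (chebyW_rec y k.+1) IH2 IH2' IH1 IH1'; split; ring.
Qed.

Lemma chebyshev_pell y k : chebyT y k ^+ 2 - (y ^+ 2 - 1) * chebyW y k ^+ 2 = 1.
Proof.
elim: k => [|k IH]; first by rewrite /=; ring.
by have [-> ->] := chebyT_chebyW_succ y k; rewrite -[RHS]IH; ring.
Qed.

Lemma prod_chebyW_expn y d k :
  \prod_(j < k) chebyW (chebyT y (d.+1 ^ j)) d.+1 = chebyW y (d.+1 ^ k).
Proof.
elim: k => [|k IH]; first by rewrite big_ord0.
by rewrite big_ord_recr IH expnS chebyW_mul mulrC.
Qed.

Lemma chebyW1 k : chebyW 1 k = k%:R.
Proof.
elim/nat_ind2: k => [|| k IH1 IH2]; [done|done|].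
by rewrite chebyW_rec IH1 IH2 -[k.+2]addn2 -[k.+1]addn1 !natrD; ring.
Qed.

End ChebyshevRecurrence.

Lemma rmorph_chebyT (R S : comNzRingType) (f : {rmorphism R -> S}) y n :
  f (chebyT y n) = chebyT (f y) n.
Proof.
elim/nat_ind2: n => [|| n IH1 IH2]; rewrite ?rmorph1 //.
by rewrite !chebyT_rec rmorphB !rmorphM rmorph_nat IH1 IH2.
Qed.

Lemma rmorph_chebyW (R S : comNzRingType) (f : {rmorphism R -> S}) y n :
  f (chebyW y n) = chebyW (f y) n.
Proof.
elim/nat_ind2: n => [|| n IH1 IH2]; rewrite ?rmorph0 ?rmorph1 //.
by rewrite !chebyW_rec rmorphB !rmorphM rmorph_nat IH1 IH2.
Qed.

Lemma sum_chebyW_telescope (F : fieldType) (y : F) d n :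
  (forall k, chebyW y (d.+1 ^ k) != 0) ->
  \sum_(k < n) chebyW (chebyT y (d.+1 ^ k)) d
                * \prod_(j < k.+1) (chebyW (chebyT y (d.+1 ^ j)) d.+1)^-1
  = y - chebyT y (d.+1 ^ n) / chebyW y (d.+1 ^ n).
Proof.
move=> W_neq0; elim: n => [|n IH]; first by rewrite big_ord0 /= divr1 subrr.
rewrite big_ord_recr IH /= prodfV prod_chebyW_expn.
set M := (d.+1 ^ n)%N; set a := chebyW (chebyT y M) d.+1.
have eW : chebyW y (d.+1 ^ n.+1) = a * chebyW y M by rewrite expnS chebyW_mul.
have eT : chebyT y (d.+1 ^ n.+1) = chebyT y M * a - chebyW (chebyT y M) d.
  by rewrite expnS chebyT_mul chebyT_chebyW.
have := W_neq0 n.+1; rewrite eW eT mulf_eq0 negb_or => /andP[a_neq0 WM_neq0].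
by field; rewrite a_neq0 WM_neq0.
Qed.

Lemma pell_quadratic (F : fieldType) (y t w : F) : w != 0 ->
  t ^+ 2 - (y ^+ 2 - 1) * w ^+ 2 = 1 ->
  (y - t / w) ^+ 2 - 2%:R * y * (y - t / w) + 1 = (w^-1) ^+ 2.
Proof.
move=> w_neq0 pell; apply/eqP; rewrite -subr_eq0.
suff -> : (y - t / w) ^+ 2 - 2%:R * y * (y - t / w) + 1 - (w^-1) ^+ 2
  = (t ^+ 2 - (y ^+ 2 - 1) * w ^+ 2 - 1) / w ^+ 2 by rewrite pell subrr mul0r.
by field.
Qed.

Lemma chebT_comp n (q : {poly rat}) : chebT n \Po q = chebyT q n.
Proof.
elim/nat_ind2: n => [|| n IH1 IH2]; first exact: comp_polyC.
  exact: comp_polyX.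
rewrite chebyT_rec -IH1 -IH2 /= comp_polyB !comp_polyM comp_polyC comp_polyX.
by rewrite polyC_natr.
Qed.

Lemma chebT_chebyT n : chebT n = chebyT 'X n.
Proof. by rewrite -chebT_comp comp_polyXr. Qed.

Lemma chebU_comp n (q : {poly rat}) : chebU n \Po q = chebyW q n.+1.
Proof.
elim/nat_ind2: n => [|| n IH1 IH2]; first exact: comp_polyC.
  by rewrite /= comp_polyM comp_polyC comp_polyX polyC_natr mulr1 subr0.
rewrite chebyW_rec -IH1 -IH2 /= comp_polyB !comp_polyM comp_polyC comp_polyX.
by rewrite polyC_natr.
Qed.

Lemma chebyW_X_neq0 k : (0 < k)%N -> chebyW ('X : {poly rat}) k != 0.
Proof.
move=> k_gt0; apply/eqP=> /(congr1 (horner_eval 1)).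
rewrite rmorph_chebyW rmorph0 /= horner_evalE hornerX chebyW1 => /eqP.
by rewrite pnatr_eq0 gtn_eqF.
Qed.

Theorem theorem1p1 (n d : nat) (hd : (1 <= d)%N) :
  S_nd n d ^+ 2 - 2%:R * toQx 'X * S_nd n d + 1
  = (\prod_(j < n.+1) (Dj d j)^-1) ^+ 2.
Proof.
set x := toQx 'X.
have W_neq0 k : chebyW x (d.+1 ^ k) != 0.
  by rewrite -rmorph_chebyW tofrac_eq0 chebyW_X_neq0 ?expn_gt0.
have Dj_cheb j : Dj d j = chebyW (chebyT x (d.+1 ^ j)) d.+1.
  by rewrite /Dj chebU_comp chebT_chebyT /toQx rmorph_chebyW rmorph_chebyT.
have S_cheb : S_nd n d = x - chebyT x (d.+1 ^ n.+1) / chebyW x (d.+1 ^ n.+1).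
  rewrite -sum_chebyW_telescope //; apply: eq_bigr => k _.
  rewrite chebU_comp prednK // chebT_chebyT /toQx rmorph_chebyW rmorph_chebyT.
  by under eq_bigr do rewrite Dj_cheb.
under eq_bigr do rewrite Dj_cheb.
rewrite S_cheb prodfV prod_chebyW_expn.
exact/pell_quadratic/chebyshev_pell.
Qed.
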